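(* Let $T$ be a metric tree with uniform branch growth. If $T'$ is a metric space quasisymmetrically homeomorphic to $T$, then $T'$ has uniform branch growth.
   Context: A metric tree is a compact connected locally connected metric space with at least two points where any two points are joined by a unique arc. Branches of $T$ at $p$: components of $T\setminus\{p\}$; $p$ is a branch point if there are at least three. For a branch point label the branches $B^1_T(p),B^2_T(p),\dots$ so that diameters are non-increasing. $T$ has uniform branch growth if there is $C\ge1$ with $\mathrm{diam}B^i_T(p)\ge C^{-1}\mathrm{diam}B^3_T(p)$ for all branch points $p$ and all $i\ge3$. A homeomorphism $f:X\to Y$ is quasisymmetric if there is a homeomorphism $\eta:[0,\infty)\to[0,\infty)$ with $d_Y(f(x),f(a))/d_Y(f(x),f(b))\le\eta(d_X(x,a)/d_X(x,b))$ for all $x,a,b$ with $x\ne b$. *)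

From HB Require Import structures.
From mathcomp Require Import all_boot all_order all_algebra.
From mathcomp Require Import all_classical all_reals all_analysis.
Set Implicit Arguments. Unset Strict Implicit. Unset Printing Implicit Defensive.
Import Order.TTheory GRing.Theory Num.Theory.
Import numFieldTopology.Exports.
Local Open Scope classical_set_scope.
Local Open Scope ring_scope.

Section Defs.
Context {R : realType}.

Definition diam {T : metricType R} (A : set T) : R :=
  sup [set d | exists x y, [/\ A x, A y & d = mdist x y]].

Definition locally_connected_space (T : topologicalType) : Prop :=
  forall (x : T) (U : set T), open U -> U x ->
    exists V : set T, [/\ open V, connected V, V x & V `<=` U].

(* A is an arc from x to y: image of [0,1] under a continuous injective map
   sending 0 to x and 1 to y (continuous injections of [0,1] into a metric,
   hence Hausdorff, space are embeddings). *)
Definition is_arc {T : metricType R} (x y : T) (A : set T) : Prop :=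
  exists g : R -> T,
    [/\ {within `[0, 1]%classic, continuous g},
        (forall s t, `[0, 1]%classic s -> `[0, 1]%classic t -> g s = g t -> s = t),
        g 0 = x, g 1 = y & A = g @` `[0, 1]].

Definition metric_tree (T : metricType R) : Prop :=
  [/\ compact [set: T], connected [set: T], locally_connected_space T,
      (exists x y : T, x <> y) &
      (forall x y : T, x <> y ->
         (exists A, is_arc x y A) /\
         (forall A B, is_arc x y A -> is_arc x y B -> A = B))].

Definition branches {T : metricType R} (p : T) : set (set T) :=
  [set B | exists x, x <> p /\ B = connected_component (~` [set p]) x].

Definition branch_point {T : metricType R} (p : T) : Prop :=
  exists B1 B2 B3, [/\ branches p B1, branches p B2 & branches p B3] /\
                    [/\ B1 <> B2, B1 <> B3 & B2 <> B3].

Definition lab_index (N : option nat) (i : nat) : Prop :=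
  (1 <= i)%N /\ (if N is Some n then (i <= n)%N else True).

Definition branch_labeling {T : metricType R} (p : T) (N : option nat)
    (b : nat -> set T) : Prop :=
  [/\ (forall i, lab_index N i -> branches p (b i)),
      (forall i j, lab_index N i -> lab_index N j -> b i = b j -> i = j),
      (forall B, branches p B -> exists i, lab_index N i /\ b i = B) &
      (forall i j, lab_index N i -> lab_index N j -> (i <= j)%N ->
         diam (b j) <= diam (b i))].

Definition uniform_branch_growth (T : metricType R) : Prop :=
  exists C : R, 1 <= C /\
    forall (p : T), branch_point p ->
    forall N b, branch_labeling p N b ->
    forall i, (3 <= i)%N -> lab_index N i ->
      C^-1 * diam (b 3%N) <= diam (b i).

Definition homeo_nonneg (eta : R -> R) : Prop :=
  exists eta' : R -> R,
    [/\ {within `[0%R, +oo[, continuous eta},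
        {within `[0%R, +oo[, continuous eta'} &
        forall t, 0 <= t ->
          [/\ 0 <= eta t, 0 <= eta' t, eta' (eta t) = t & eta (eta' t) = t]].

Definition homeomorphism {X Y : topologicalType} (f : X -> Y) : Prop :=
  exists g : Y -> X, [/\ continuous f, continuous g, cancel f g & cancel g f].

Definition quasisymmetric {X Y : metricType R} (f : X -> Y) : Prop :=
  homeomorphism f /\
  exists eta : R -> R, homeo_nonneg eta /\
    forall x a b : X, x <> b ->
      mdist (f x) (f a) / mdist (f x) (f b) <= eta (mdist x a / mdist x b).

End Defs.

From HB Require Import structures.
From mathcomp Require Import all_boot all_order all_algebra.
From mathcomp Require Import all_classical all_reals all_analysis.
From mathcomp Require Import lra zify.

(* Pull the branches of T' at a branch point p' back to T along the homeomorphism.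
   Only finitely many branches of a compact, locally connected tree are larger than any
   given positive size, so the pulled-back branches can be sorted by diameter, and uniform
   branch growth of T shows that in T one of the first three branches of T' is at most C
   times as large as the i-th one.  Since p lies in the closure of every branch at p, the
   quasisymmetric map distorts such a comparison by at most the factor
   2 sup_[0, 4C] eta, and the third branch of T' is no larger than the first three. *)

Set Implicit Arguments. Unset Strict Implicit. Unset Printing Implicit Defensive.
Import Order.TTheory GRing.Theory Num.Theory.
Import numFieldTopology.Exports.
Local Open Scope classical_set_scope.
Local Open Scope ring_scope.

Definition lab_indexb (N : option nat) : pred nat :=
  fun i => (1 <= i)%N && (if N is Some n then (i <= n)%N else true).

Lemma lab_indexP N i : reflect (lab_index N i) (lab_indexb N i).
Proof. by rewrite /lab_index /lab_indexb; case: N => [n|] /=; apply: (iffP andP); case. Qed.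

Lemma lab_indexb_le N r i : lab_indexb N r -> (1 <= i <= r)%N -> lab_indexb N i.
Proof. by rewrite /lab_indexb; case: N => [n|] /=; lia. Qed.

Lemma lab_index_le N r i : lab_index N r -> (1 <= i <= r)%N -> lab_index N i.
Proof. by move=> /lab_indexP lr ir; apply/lab_indexP; apply: lab_indexb_le lr ir. Qed.

Section Ranking.
Variables (N : option nat) (before : rel nat) (bnd : nat -> nat).
Hypothesis before_irr : irreflexive before.
Hypothesis before_trans : transitive before.
Hypothesis before_total : forall j k, j != k -> before j k || before k j.
Hypothesis before_bnd : forall k i,
  lab_indexb N k -> lab_indexb N i -> before i k -> (i < bnd k)%N.

Local Notation lab := (lab_indexb N).

Let preds k := [seq i <- iota 0 (bnd k) | lab i && before i k].

Let rank k := (size (preds k)).+1.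

Let mem_preds k i : lab k -> (i \in preds k) = lab i && before i k.
Proof.
move=> lk; rewrite mem_filter mem_iota /= andb_idr // => /andP[li bik].
exact: before_bnd.
Qed.

Let uniq_preds k : uniq (preds k).
Proof. exact/filter_uniq/iota_uniq. Qed.

Let rank_lt j k : lab j -> lab k -> before j k -> (rank j < rank k)%N.
Proof.
move=> lj lk bjk; rewrite /rank ltnS -[(size _).+1]/(size (j :: preds j)).
apply: uniq_leq_size => [|i]; first by rewrite /= uniq_preds mem_preds // before_irr andbF.
rewrite in_cons mem_preds // mem_preds // => /predU1P[->|/andP[li bij]].
  by rewrite lj bjk.
by rewrite li (before_trans bij bjk).
Qed.

Let rank_inj : {in lab &, injective rank}.
Proof.
move=> j k lj lk ejk; apply/eqP; apply: contraT => /before_total.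
by case/orP => [/(rank_lt lj lk)|/(rank_lt lk lj)]; rewrite ejk ltnn.
Qed.

Let rank_lab k : lab k -> lab (rank k).
Proof.
move=> lk; rewrite /lab_indexb /rank /=; case EN: N => [n|] //.
rewrite -[(size _).+1]/(size (k :: preds k)) -[n](size_iota 1).
apply: uniq_leq_size => [|i]; first by rewrite /= uniq_preds mem_preds // before_irr andbF.
rewrite in_cons mem_iota => /predU1P[->|]; first by move: lk; rewrite /lab_indexb EN; lia.
by rewrite mem_preds // => /andP[]; rewrite /lab_indexb EN; lia.
Qed.

Let ranks_below_size (s : seq nat) r : uniq s -> {subset s <= lab} ->
  (forall i, i \in s -> (rank i < r)%N) -> (size s <= r.-1)%N.
Proof.
move=> us sl rs; rewrite -(size_map rank) -[r.-1](size_iota 1).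
apply: uniq_leq_size => [|_ /mapP[i si ->]].
  by rewrite map_inj_in_uniq // => i j /sl li /sl lj; apply: rank_inj.
by rewrite mem_iota /=; have := rs i si; lia.
Qed.

(* Starting from a label of rank at least [r], pass to a predecessor of rank at least [r]
   while there is one; all predecessors of the last label have distinct ranks below [r]. *)
Let rank_surj r : lab r -> exists2 k, lab k & rank k = r.
Proof.
move=> lr; have r1 : (1 <= r)%N by case/andP: lr.
have [k lk rk] : exists2 k, lab k & (r <= rank k)%N.
  apply: contrapT => norank.
  have lab_iota : {subset iota 1 r <= lab}.
    by move=> i; rewrite mem_iota => /andP[i1 ir]; apply: (lab_indexb_le lr); lia.
  have small i : i \in iota 1 r -> (rank i < r)%N.
    by move=> /lab_iota li; rewrite ltnNge; apply/negP => ri; apply: norank; exists i.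
  by have := ranks_below_size (iota_uniq 1 r) lab_iota small; rewrite size_iota; lia.
elim: {k}(rank k) {-2}k (leqnn (rank k)) lk rk => [|m IH] k rkm lk rk.
  by move: rkm; rewrite leqn0.
have [/hasP[i] |] := boolP (has (fun i => r <= rank i)%N (preds k)).
  rewrite mem_preds // => /andP[li bik] ri.
  by apply: (IH i) => //; have := rank_lt li lk bik; lia.
rewrite -all_predC => /allP small; exists k => //; apply/eqP; rewrite eqn_leq rk andbT.
rewrite -[rank k]/(size (preds k)).+1 -ltnS -(prednK r1) ltnS.
apply: ranks_below_size => [|i|i /small]; rewrite ?uniq_preds //.
  by rewrite mem_preds // => /andP[].
by rewrite /= -ltnNge.
Qed.

Lemma sort_labels : exists s : nat -> nat,
  [/\ forall r, lab r -> lab (s r),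
      {in lab &, injective s},
      forall j, lab j -> exists2 r, lab r & s r = j &
      forall r r', lab r -> lab r' -> (r <= r')%N -> ~~ before (s r') (s r)].
Proof.
have /choice [s sK] : forall r, exists k, lab r -> lab k /\ rank k = r.
  move=> r; case: (boolP (lab r)) => [/rank_surj [k lk <-]|_]; last by exists 0%N.
  by exists k.
exists s; split.
- by move=> r /sK[].
- by move=> r r' /sK[_ er] /sK[_ er'] e; rewrite -er -er' e.
- move=> j lj; exists (rank j); first exact: rank_lab.
  by have [ls e] := sK _ (rank_lab lj); apply: rank_inj.
- move=> r r' /sK[lsr esr] /sK[lsr' esr'] rr'; apply/negP => /(rank_lt lsr' lsr).
  by rewrite esr esr' ltnNge rr'.
Qed.

End Ranking.

Lemma sort_labels_nonincreasing {R : realType} N (a : nat -> R) :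
  (forall j, lab_indexb N j ->
     exists M, forall k, lab_indexb N k -> a j <= a k -> (k <= M)%N) ->
  exists s : nat -> nat,
  [/\ forall r, lab_indexb N r -> lab_indexb N (s r),
      {in lab_indexb N &, injective s},
      forall j, lab_indexb N j -> exists2 r, lab_indexb N r & s r = j &
      forall r r', lab_indexb N r -> lab_indexb N r' -> (r <= r')%N ->
        a (s r') <= a (s r)].
Proof.
move=> bounded.
(* Ties are broken by the label, so that [before] is a strict total order. *)
pose before j k := (a k < a j) || ((a k == a j) && (j < k)%N).
have before_le j k : before j k -> a k <= a j.
  by case/orP => [/ltW|/andP[/eqP -> _]].
have before_irr : irreflexive before by move=> j; rewrite /before ltxx eqxx ltnn.
have before_trans : transitive before.
  move=> k j l; rewrite /before => /orP[kj|/andP[/eqP kj jk]] /orP[lk|/andP[/eqP lk kl]].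
  - by rewrite (lt_trans lk kj).
  - by rewrite lk kj.
  - by rewrite -kj lk.
  - by rewrite lk kj eqxx (ltn_trans jk kl) orbT.
have before_total j k : j != k -> before j k || before k j.
  move=> jk; rewrite /before; case: (ltgtP (a k) (a j)) => //= _.
  by case: (ltngtP j k) => // ejk; rewrite ejk eqxx in jk.
have /choice [M HM] : forall j, exists M, lab_indexb N j ->
    forall k, lab_indexb N k -> a j <= a k -> (k <= M)%N.
  move=> j; case: (boolP (lab_indexb N j)) => [/bounded [M HM]|_]; last by exists 0%N.
  by exists M.
have [s [sl sinj ssurj smono]] := sort_labels before_irr before_trans before_total
  (bnd := fun k => (M k).+1) (fun k i lk li bik => HM k lk i li (before_le _ _ bik)).
exists s; split => // r r' lr lr' rr'; have := smono r r' lr lr' rr'.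
case: (eqVneq (s r) (s r')) => [-> //|/before_total].
by case/orP => [/before_le|->].
Qed.

Lemma image_cancel {X Y : Type} (f : X -> Y) (g : Y -> X) (B : set Y) :
  cancel g f -> f @` (g @` B) = B.
Proof.
move=> gK; apply/seteqP; split; first by move=> _ [_ [x Bx <-] <-]; rewrite gK.
by move=> y By; exists (g y); [exists y|rewrite gK].
Qed.

Lemma image_setC1 {X Y : Type} (h : X -> Y) (h' : Y -> X) (p : X) :
  cancel h h' -> cancel h' h -> h @` (~` [set p]) = ~` [set h p].
Proof.
move=> hK h'K; apply/seteqP; split; first by move=> _ [x xp <-] /(can_inj hK).
by move=> y yp; exists (h' y); rewrite ?h'K //= => e; apply: yp; rewrite -e h'K.
Qed.

Section Topology.
Context {T : topologicalType}.
Implicit Types (A U : set T) (x : T).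

Lemma open_connected_component U x :
  locally_connected_space T -> open U -> open (connected_component U x).
Proof.
move=> lcT oU; rewrite openE => y Cy.
have [V [oV cV Vy VU]] := lcT y U oU (connected_component_sub Cy).
rewrite (same_connected_component Cy).
apply: (@filterS _ _ _ V); first exact: connected_component_max.
by apply: open_nbhs_nbhs; split.
Qed.

Lemma compact_seq_cluster (u : nat -> T) : compact [set: T] ->
  exists q : T, forall (N : nat) (B : set T), nbhs q B -> exists2 n, (N <= n)%N & B (u n).
Proof.
move=> cT; have [q [_ cq]] : [set: T] `&` cluster (u @ \oo) !=set0.
  by apply: cT; exact: filterT.
exists q => N B qB.
have uN : (u @ \oo) [set y | exists2 n, (N <= n)%N & y = u n].
  by exists N => // n /= Nn; exists n.
by have [_ [[n Nn ->] Bun]] := cq _ _ uN qB; exists n.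
Qed.

Lemma compact_setT_image {Y : topologicalType} (f : T -> Y) (g : Y -> T) :
  continuous f -> cancel g f -> compact [set: T] -> compact [set: Y].
Proof.
move=> cf gK cT; have -> : [set: Y] = f @` [set: T].
  by apply/seteqP; split => // y _; exists (g y).
exact/continuous_compact/cT/continuous_subspaceT.
Qed.

Lemma image_closure_sub {Y : topologicalType} (f : T -> Y) A :
  continuous f -> f @` closure A `<=` closure (f @` A).
Proof.
move=> cf _ [p clAp <-] V /cf/clAp [x [Ax Vfx]].
by exists (f x); split; [exists x|].
Qed.

Lemma image_connected_component_sub {Y : topologicalType} (h : T -> Y) A x :
  continuous h -> h @` connected_component A x `<=` connected_component (h @` A) (h x).
Proof.
move=> ch; have [Ax|nAx] := pselect (A x); last first.
  by rewrite connected_component_out // image_set0.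
apply: connected_component_max.
- by exists x => //; apply: connected_component_refl.
- exact: image_subset (@connected_component_sub _ A x).
- apply: connected_continuous_connected; first exact: component_connected.
  exact: continuous_subspaceT.
Qed.

End Topology.

Lemma image_connected_component {X Y : topologicalType} (h : X -> Y) (h' : Y -> X)
    (A : set X) (x : X) :
  continuous h -> continuous h' -> cancel h h' -> cancel h' h ->
  h @` connected_component A x = connected_component (h @` A) (h x).
Proof.
move=> ch ch' hK h'K; apply/seteqP; split; first exact: image_connected_component_sub.
rewrite -[Z in Z `<=` _](image_cancel _ h'K); apply: image_subset.
have := image_connected_component_sub (A := h @` A) (x := h x) ch'.
by rewrite image_cancel // hK.
Qed.

Section Diameter.
Context {R : realType} {T : metricType R}.
Implicit Types (A : set T) (p x y : T).

Lemma diam_ge0 A : 0 <= diam A.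
Proof.
rewrite /diam; set D := [set d | _].
have [supD|/sup_out -> //] := pselect (has_sup D).
have [[d Dd] _] := supD; apply: le_trans (sup_upper_bound supD Dd).
by case: Dd => [x [y [_ _ ->]]]; apply: mdist_ge0.
Qed.

Lemma diam_le A x c :
  A x -> (forall u v, A u -> A v -> mdist u v <= c) -> diam A <= c.
Proof.
move=> Ax Ac; apply: ge_sup; first by exists (mdist x x), x, x.
by move=> _ [u [v [Au Av ->]]]; apply: Ac.
Qed.

Lemma exists_far_point A p x : A x -> exists2 y, A y & diam A <= 4 * mdist p y.
Proof.
move=> Ax; apply: contrapT => nofar.
have near y : A y -> 4 * mdist p y < diam A.
  by move=> Ay; rewrite ltNge; apply/negP => h; apply: nofar; exists y.
have : diam A <= diam A / 2.
  apply: (diam_le Ax) => u v Au Av.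
  apply: le_trans (metric_triangle u p v) _; rewrite metric_sym.
  by have := near u Au; have := near v Av; lra.
by have := near x Ax; have := mdist_ge0 p x; lra.
Qed.

Lemma compact_mdist_bounded :
  compact [set: T] -> exists M, forall u v : T, mdist u v <= M.
Proof.
move=> cT; apply: contrapT => unbounded.
have [x0 _] : exists x0 : T, True.
  by apply: contrapT => empty; apply: unbounded; exists 0 => u; case: empty; exists u.
have far (n : nat) : exists y, n%:R < mdist x0 y.
  apply: contrapT => near; apply: unbounded; exists (n%:R + n%:R) => u v.
  apply: le_trans (metric_triangle u x0 v) _; rewrite metric_sym.
  by apply: lerD; rewrite leNgt; apply/negP => h; apply: near; eexists; exact: h.
have [u ufar] := choice far; have [q clq] := compact_seq_cluster u cT.
have [n Nn] := clq (Num.truncn (mdist x0 q + 1)).+1 _ (nbhsx_ballx q 1 ltr01).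
rewrite ballEmdist /= => qun; have := ufar n; have := truncnS_gt (mdist x0 q + 1).
have := metric_triangle x0 q (u n); rewrite -(ler_nat R) in Nn; lra.
Qed.

Section Bounded.
Variable M : R.
Hypothesis mdist_bounded : forall u v : T, mdist u v <= M.

Lemma mdist_le_diam A x y : A x -> A y -> mdist x y <= diam A.
Proof.
move=> Ax Ay; apply: ub_le_sup; last by exists x, y.
by exists M => _ [u [v [_ _ ->]]].
Qed.

Lemma closure_mdist_le_diam A p x : closure A p -> A x -> mdist p x <= diam A.
Proof.
move=> clAp Ax; apply/ler_addgt0Pr => e e0.
have [z [Az pz]] := clAp _ (nbhsx_ballx p e e0); rewrite ballEmdist /= in pz.
have := mdist_le_diam Az Ax; have := metric_triangle p z x; lra.
Qed.

End Bounded.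
End Diameter.

Definition branch_enum {R : realType} {T : metricType R} (p : T) (N : option nat)
    (b : nat -> set T) : Prop :=
  [/\ forall i, lab_index N i -> branches p (b i),
      forall i j, lab_index N i -> lab_index N j -> b i = b j -> i = j &
      forall B, branches p B -> exists i, lab_index N i /\ b i = B].

Section Branches.
Context {R : realType} {T : metricType R}.
Implicit Types (B : set T) (p y : T).

Lemma branchesE p B y : branches p B -> B y -> B = connected_component (~` [set p]) y.
Proof. by move=> [x [_ ->]] /same_connected_component. Qed.

Lemma branch_neq p B y : branches p B -> B y -> y <> p.
Proof. by move=> [x [_ ->]] /connected_component_sub. Qed.

Lemma branch_nonempty p B : branches p B -> exists x, B x.
Proof. by move=> [x [xp ->]]; exists x; apply: connected_component_refl. Qed.

Lemma branches_image {T' : metricType R} (h : T -> T') (h' : T' -> T) p B :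
  continuous h -> continuous h' -> cancel h h' -> cancel h' h ->
  branches p B -> branches (h p) (h @` B).
Proof.
move=> ch ch' hK h'K [x [xp ->]]; exists (h x); split; first by move/(can_inj hK).
by rewrite (image_connected_component _ _ ch ch' hK h'K) (image_setC1 _ hK h'K).
Qed.

Hypothesis lcT : locally_connected_space T.

Lemma open_branch p B : branches p B -> open B.
Proof.
move=> [x [_ ->]]; apply: open_connected_component lcT _; apply: closed_openC.
exact/accessible_closed_set1/hausdorff_accessible/metric_hausdorff.
Qed.

(* If [p] were not in the closure of the branch, the branch would be clopen. *)
Lemma branch_closure p B : connected [set: T] -> branches p B -> closure B p.
Proof.
move=> conT bB; apply: contrapT => nclp; have [x Bx] := branch_nonempty bB.
have clB : closure B `<=` B.
  rewrite {2}(branchesE bB Bx); apply: connected_component_max.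
  - exact: subset_closure.
  - by move=> z clz /= zp; apply: nclp; rewrite -zp.
  - by apply: connected_closure; rewrite (branchesE bB Bx); apply: component_connected.
have cB : closed B by rewrite closure_id; apply/seteqP; split; [exact: subset_closure|].
have BT : B = [set: T].
  by apply: conT; [exists x|exists B; [apply: open_branch bB|rewrite setTI]|
                   exists B; rewrite ?setTI].
have Bp : B p by rewrite BT.
exact: branch_neq bB Bp erefl.
Qed.

End Branches.

Lemma branch_enum_image {R : realType} {T T' : metricType R}
    (h : T -> T') (h' : T' -> T) p N A :
  continuous h -> continuous h' -> cancel h h' -> cancel h' h ->
  branch_enum p N A -> branch_enum (h p) N (fun i => h @` A i).
Proof.
move=> ch ch' hK h'K [bA injA surjA]; split.
- by move=> i /bA; apply: branches_image ch ch' hK h'K.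
- move=> i j li lj e; apply: injA => //.
  by rewrite -[A i](image_cancel (A _) hK) -[A j](image_cancel (A _) hK) e.
- move=> B /(branches_image ch' ch h'K hK); rewrite hK => /surjA [i [li eA]].
  by exists i; split; rewrite // eA image_cancel.
Qed.

Definition branch_growth_bound {R : realType} (T : metricType R) (C : R) : Prop :=
  forall p : T, branch_point p -> forall N b, branch_labeling p N b ->
  forall i, (3 <= i)%N -> lab_index N i -> C^-1 * diam (b 3%N) <= diam (b i).

(* Among three distinct branches one is labelled at least 3. *)
Lemma three_branches_diam_le {R : realType} {T : metricType R} (C : R) (p : T) N b
    (B1 B2 B3 B : set T) :
  1 <= C -> branch_growth_bound T C -> branch_labeling p N b ->
  branches p B1 -> branches p B2 -> branches p B3 ->
  B1 <> B2 -> B1 <> B3 -> B2 <> B3 -> branches p B ->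
  [\/ diam B1 <= C * diam B, diam B2 <= C * diam B | diam B3 <= C * diam B].
Proof.
move=> C1 growth lab bB1 bB2 bB3 n12 n13 n23 bB.
have bp : branch_point p by exists B1, B2, B3.
have [_ _ surj mono] := lab.
have [i [li <-]] := surj B bB.
have [r1 [l1 e1]] := surj B1 bB1; have [r2 [l2 e2]] := surj B2 bB2.
have [r3 [l3 e3]] := surj B3 bB3.
have b3_le r : lab_index N r -> (3 <= r)%N -> diam (b r) <= C * diam (b i).
  move=> lr r_ge3; have l3' : lab_index N 3 by apply: lab_index_le lr _; lia.
  apply: le_trans (mono 3%N r l3' lr r_ge3) _.
  have [i3|i3] := leqP 3 i.
    have C0 : 0 < C by lra.
    have := ler_wpM2l (ltW C0) (growth p bp N b lab i i3 li).
    by rewrite mulrA mulfV ?mul1r // gt_eqF.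
  apply: le_trans (mono i 3%N li l3' (ltnW i3)) _.
  by rewrite ler_peMl // diam_ge0.
have r_ge1 r : lab_index N r -> (1 <= r)%N by case.
have [h1|h1] := leqP 3 r1; first by apply: Or31; rewrite -e1; apply: b3_le.
have [h2|h2] := leqP 3 r2; first by apply: Or32; rewrite -e2; apply: b3_le.
apply: Or33; rewrite -e3; apply: b3_le => //.
have := r_ge1 _ l1; have := r_ge1 _ l2; have := r_ge1 _ l3.
have : r1 != r2 by apply/eqP => e; apply: n12; rewrite -e1 -e2 e.
have : r1 != r3 by apply/eqP => e; apply: n13; rewrite -e1 -e3 e.
have : r2 != r3 by apply/eqP => e; apply: n23; rewrite -e2 -e3 e.
lia.
Qed.

Section CompactBranches.
Context {R : realType} {T : metricType R}.
Hypotheses (cT : compact [set: T]) (conT : connected [set: T])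
  (lcT : locally_connected_space T).

Lemma branch_diam_gt0 (p : T) B : branches p B -> 0 < diam B.
Proof.
move=> bB; have [M bddT] := compact_mdist_bounded cT.
have [x Bx] := branch_nonempty bB.
apply: lt_le_trans (closure_mdist_le_diam bddT (branch_closure lcT conT bB) Bx).
by rewrite mdist_gt0; apply/eqP => px; apply: (branch_neq bB Bx).
Qed.

(* Otherwise far points of infinitely many branches would cluster at some [q <> p],
   and the branch containing [q] is an open neighbourhood of [q]. *)
Lemma branch_index_bounded (p : T) (I : pred nat) (A : nat -> set T) e :
  (forall k, I k -> branches p (A k)) -> {in I &, injective A} -> 0 < e ->
  exists M, forall k, I k -> e <= diam (A k) -> (k <= M)%N.
Proof.
move=> bA injA e0; apply: contrapT => unbounded.
have /choice [h hP] : forall M, exists k, [/\ I k, (M < k)%N & e <= diam (A k)].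
  move=> M; apply: contrapT => nk; apply: unbounded; exists M => k Ik ek.
  by rewrite leqNgt; apply/negP => Mk; apply: nk; exists k.
have /choice [y yP] : forall n, exists y, A (h n) y /\ e <= 4 * mdist p y.
  move=> n; have [Ih _ eh] := hP n; have [x Ax] := branch_nonempty (bA _ Ih).
  have [z Az ez] := exists_far_point p Ax.
  by exists z; split => //; apply: le_trans ez.
have [q clq] := compact_seq_cluster y cT.
have qp : q <> p.
  move=> qp; have e4 : 0 < e / 4 by lra.
  have [n _] := clq 0%N _ (nbhsx_ballx q _ e4); rewrite ballEmdist /= qp.
  by have [_] := yP n; lra.
have bq : branches p (connected_component (~` [set p]) q) by exists q.
have nbq : nbhs q (connected_component (~` [set p]) q).
  by apply: open_nbhs_nbhs; split; [exact: open_branch bq|exact: connected_component_refl].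
have Ah n : connected_component (~` [set p]) q (y n) ->
    A (h n) = connected_component (~` [set p]) q.
  have [Ih _ _] := hP n; have [Ay _] := yP n.
  by move=> By; rewrite (branchesE (bA _ Ih) Ay) (branchesE bq By).
have [n0 _ /Ah A0] := clq 0%N _ nbq; have [n1 n01 /Ah A1] := clq (h n0).+1 _ nbq.
have [I0 _ _] := hP n0; have [I1 lt1 _] := hP n1.
by have := injA _ _ I0 I1; rewrite A0 A1 => /(_ erefl); lia.
Qed.

Lemma sorted_branch_labeling (p : T) N A :
  branch_enum p N A -> exists b, branch_labeling p N b.
Proof.
move=> [bA injA surjA].
have bAb i : lab_indexb N i -> branches p (A i) by move/lab_indexP/bA.
have [|s [sl sinj ssurj smono]] := @sort_labels_nonincreasing _ N (fun i => diam (A i)).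
  move=> j lj; apply: (branch_index_bounded bAb _ (branch_diam_gt0 (bAb j lj))).
  by move=> i k /lab_indexP li /lab_indexP lk; apply: injA.
exists (A \o s); split.
- by move=> r /lab_indexP/sl; apply: bAb.
- by move=> r r' /lab_indexP lr /lab_indexP lr' /injA eA; apply: sinj; rewrite // eA //;
    apply/lab_indexP/sl.
- move=> B /surjA [j [/lab_indexP lj <-]]; have [r lr <-] := ssurj j lj.
  by exists r; split => //; apply/lab_indexP.
- by move=> r r' /lab_indexP lr /lab_indexP lr'; apply: smono.
Qed.

Lemma branch_enum_three_diam_le (C : R) (p : T) N A i :
  1 <= C -> branch_growth_bound T C -> branch_enum p N A ->
  lab_index N 3 -> lab_index N i ->
  exists2 m, (1 <= m <= 3)%N & diam (A m) <= C * diam (A i).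
Proof.
move=> C1 growth enumA l3 li; have [b lab] := sorted_branch_labeling enumA.
have [bA injA _] := enumA.
have bAj j : (1 <= j <= 3)%N -> branches p (A j) by move/(lab_index_le l3)/bA.
have nA j k : (1 <= j <= 3)%N -> (1 <= k <= 3)%N -> j != k -> A j <> A k.
  by move=> /(lab_index_le l3) lj /(lab_index_le l3) lk /eqP jk /(injA _ _ lj lk).
by case: (three_branches_diam_le C1 growth lab (bAj 1%N isT) (bAj 2%N isT)
  (bAj 3%N isT) (nA 1%N 2%N isT isT isT) (nA 1%N 3%N isT isT isT)
  (nA 2%N 3%N isT isT isT) (bA i li)) => ?; [exists 1%N|exists 2%N|exists 3%N].
Qed.

End CompactBranches.

Lemma homeo_nonneg_bounded {R : realType} (eta : R -> R) (c : R) :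
  homeo_nonneg eta -> 0 <= c ->
  exists2 K, 0 <= K & forall t, 0 <= t <= c -> eta t <= K.
Proof.
move=> [eta' [ceta _ etaP]] c0.
have [t0 t0c t0max] : exists2 t0, t0 \in `[0, c] &
    forall t, t \in `[0, c] -> eta t <= eta t0.
  apply: EVT_max => //; apply: continuous_subspaceW ceta => t /=.
  by rewrite !in_itv /= => /andP[-> _].
exists (eta t0); last by move=> t tc; apply: t0max; rewrite in_itv.
by move: t0c; rewrite in_itv /= => /andP[/etaP[]].
Qed.

Section Quasisymmetry.
Context {R : realType} {T T' : metricType R}.
Variables (f : T -> T') (eta : R -> R).
Hypothesis qs_f : forall x a b : T, x <> b ->
  mdist (f x) (f a) / mdist (f x) (f b) <= eta (mdist x a / mdist x b).
Hypothesis f_inj : injective f.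

Lemma qs_mdist_le (p x y : T) (c K : R) :
  y <> p -> mdist p x <= c * mdist p y -> (forall t, 0 <= t <= c -> eta t <= K) ->
  mdist (f p) (f x) <= K * mdist (f p) (f y).
Proof.
move=> yp pxy etaK.
have py : 0 < mdist p y by rewrite mdist_gt0; apply/eqP => /esym.
have fpy : 0 < mdist (f p) (f y) by rewrite mdist_gt0; apply/eqP => /f_inj /esym.
rewrite -ler_pdivrMr //; apply: le_trans (qs_f x (fun py => yp (esym py))) _.
by apply: etaK; rewrite divr_ge0 ?mdist_ge0 //= ler_pdivrMr.
Qed.

Lemma qs_diam_le (M M' C K : R) (p : T) (A B : set T) (xA xB : T) :
  (forall u v : T, mdist u v <= M) -> (forall u v : T', mdist u v <= M') ->
  continuous f -> 0 <= C -> 0 <= K -> (forall t, 0 <= t <= 4 * C -> eta t <= K) ->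
  closure A p -> closure B p -> A xA -> B xB -> ~ B p ->
  diam A <= C * diam B -> diam (f @` A) <= 2 * K * diam (f @` B).
Proof.
move=> bddT bddT' cf C0 K0 etaK clA clB AxA BxB nBp AB.
have [y By far] := exists_far_point p BxB.
have yp : y <> p by move=> e; apply: nBp; rewrite -e.
have fy_le : mdist (f p) (f y) <= diam (f @` B).
  apply: (closure_mdist_le_diam bddT' _ (imageP f By)).
  exact/image_closure_sub/imageP.
have fx_le x : A x -> mdist (f p) (f x) <= K * mdist (f p) (f y).
  move=> Ax; apply: qs_mdist_le yp _ etaK.
  have := closure_mdist_le_diam bddT clA Ax; nra.
apply: diam_le (imageP f AxA) _ => _ _ [u Au <-] [v Av <-].
apply: le_trans (metric_triangle (f u) (f p) (f v)) _; rewrite metric_sym.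
by have := fx_le u Au; have := fx_le v Av; nra.
Qed.

Lemma qs_branch_diam_le (M' C K : R) (p : T) (A B : set T) :
  compact [set: T] -> connected [set: T] -> locally_connected_space T ->
  (forall u v : T', mdist u v <= M') -> continuous f ->
  0 <= C -> 0 <= K -> (forall t, 0 <= t <= 4 * C -> eta t <= K) ->
  branches p A -> branches p B ->
  diam A <= C * diam B -> diam (f @` A) <= 2 * K * diam (f @` B).
Proof.
move=> cT conT lcT bddT' cf C0 K0 etaK bA bB.
have [M bddT] := compact_mdist_bounded cT.
have [xA AxA] := branch_nonempty bA; have [xB BxB] := branch_nonempty bB.
exact: qs_diam_le bddT bddT' cf C0 K0 etaK (branch_closure lcT conT bA)
  (branch_closure lcT conT bB) AxA BxB (branch_neq bB ^~ erefl).
Qed.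

End Quasisymmetry.

Theorem lemma2p7 (R : realType) (T T' : metricType R) :
  metric_tree T -> uniform_branch_growth T ->
  (exists f : T -> T', quasisymmetric f) ->
  uniform_branch_growth T'.
Proof.
move=> [cT conT lcT _ _] [C [C1 growthT]].
move=> [f [[g [cf cg fK gK]] [eta [eta_homeo qs_f]]]].
have [M' bddT'] := compact_mdist_bounded (compact_setT_image cf gK cT).
have C0 : 0 <= C by lra.
have [K K0 etaK] := homeo_nonneg_bounded eta_homeo (mulr_ge0 (ler0n _ 4) C0).
exists (1 + 2 * K); split; first lra.
move=> p' _ N b' [bl1 bl2 bl3 mono'] i i3 li.
have l3 : lab_index N 3 by apply: lab_index_le li _; lia.
have enumA := branch_enum_image cg cf gK fK (And3 bl1 bl2 bl3).
have [m m13 Am] := branch_enum_three_diam_le cT conT lcT C1 growthT enumA l3 li.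
have [bA _ _] := enumA.
have := qs_branch_diam_le qs_f (can_inj fK) cT conT lcT bddT' cf C0 K0 etaK
  (bA m (lab_index_le l3 m13)) (bA i li) Am.
rewrite !image_cancel // => fAm.
have := mono' m 3%N (lab_index_le l3 m13) l3 (proj2 (andP m13)).
have := diam_ge0 (b' i); rewrite mulrC ler_pdivrMr; last lra.
nra.
Qed.
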